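(* Let $E$ be a finite set and $\tau:2^E\to 2^E$. If $(E,\tau)$ is a violator space, then for every $X\subseteq E$, $ex(X)=\bigcap\{B\subseteq X:\tau(B)=\tau(X)\}$. If $(E,\tau)$ is a convex space, then for every $X\subseteq E$, $ex(X)\subseteq\bigcap\{B\subseteq X:\tau(B)=\tau(X)\}$.
   Context: $(E,\tau)$ is a violator space if (C1) $Y\subseteq\tau(Y)$ for all $Y$, and (C22) $F\subseteq G\subseteq\tau(F)$ implies $\tau(G)=\tau(F)$. $(E,\tau)$ is a convex space if (C1) holds and (convexity) for all $Y_1\subseteq Y_2\subseteq Y_3\subseteq E$ with $\tau(Y_1)=\tau(Y_3)$ we have $\tau(Y_2)=\tau(Y_1)$. An element $x\in X$ is an extreme point of $X$ if $x\notin\tau(X-\{x\})$; $ex(X)$ is the set of extreme points of $X$. *)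

From mathcomp Require Import all_boot.
Set Implicit Arguments. Unset Strict Implicit. Unset Printing Implicit Defensive.

Definition extensive (E : finType) (tau : {set E} -> {set E}) : Prop :=
  forall Y : {set E}, Y \subset tau Y.

Definition C22 (E : finType) (tau : {set E} -> {set E}) : Prop :=
  forall F G : {set E}, F \subset G -> G \subset tau F -> tau G = tau F.

Definition violator_space (E : finType) (tau : {set E} -> {set E}) : Prop :=
  extensive tau /\ C22 tau.

Definition convexity (E : finType) (tau : {set E} -> {set E}) : Prop :=
  forall Y1 Y2 Y3 : {set E}, Y1 \subset Y2 -> Y2 \subset Y3 ->
    tau Y1 = tau Y3 -> tau Y2 = tau Y1.

Definition convex_space (E : finType) (tau : {set E} -> {set E}) : Prop :=
  extensive tau /\ convexity tau.

Definition ex (E : finType) (tau : {set E} -> {set E}) (X : {set E}) : {set E} :=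
  [set x in X | x \notin tau (X :\ x)].

Definition bases_cap (E : finType) (tau : {set E} -> {set E}) (X : {set E}) : {set E} :=
  \bigcap_(B : {set E} | (B \subset X) && (tau B == tau X)) B.

From mathcomp Require Import all_boot.
Set Implicit Arguments. Unset Strict Implicit. Unset Printing Implicit Defensive.

(* An extreme point x of X lies in every B ⊆ X with tau B = tau X: otherwise
   B ⊆ X - {x} ⊆ X, and either axiom (C22 or convexity) forces
   tau (X - {x}) = tau X ∋ x.  Conversely, in a violator space, a point x of X
   with x ∈ tau (X - {x}) satisfies X ⊆ tau (X - {x}), so by C22 the set
   X - {x} has the same closure as X and misses x. *)

Section ExtremePoints.

Variables (E : finType) (tau : {set E} -> {set E}).

Lemma bases_cap_sub (X B : {set E}) :
  B \subset X -> tau B = tau X -> bases_cap tau X \subset B.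
Proof. by move=> BX tauB; apply: bigcap_inf; rewrite BX tauB eqxx. Qed.

Lemma bases_cap_subset (X : {set E}) : bases_cap tau X \subset X.
Proof. exact: bases_cap_sub. Qed.

Lemma ex_sub_bases_cap (X : {set E}) :
  extensive tau ->
  (forall (B : {set E}) (x : E), B \subset X :\ x -> tau B = tau X ->
     tau (X :\ x) = tau X) ->
  ex tau X \subset bases_cap tau X.
Proof.
move=> ext tau_del; apply/subsetP => x; rewrite inE => /andP [xX x_ntau].
apply/bigcapP => B /andP [BX /eqP tauB]; apply: contraNT x_ntau => xB.
have BXx : B \subset X :\ x by apply/subsetD1P.
by rewrite (tau_del B x BXx tauB) (subsetP (ext X)).
Qed.

Lemma C22_tau_setD1 (X B : {set E}) (x : E) :
  extensive tau -> C22 tau -> B \subset X :\ x -> tau B = tau X ->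
  tau (X :\ x) = tau X.
Proof.
move=> ext c22 BXx tauB; rewrite -tauB; apply: c22 => //.
by rewrite tauB (subset_trans (subsetDl X [set x]) (ext X)).
Qed.

Lemma convexity_tau_setD1 (X B : {set E}) (x : E) :
  convexity tau -> B \subset X :\ x -> tau B = tau X -> tau (X :\ x) = tau X.
Proof.
move=> cvx BXx tauB; rewrite -tauB (cvx B (X :\ x) X) //; exact: subsetDl.
Qed.

Lemma tau_setD1_mem (X : {set E}) (x : E) :
  extensive tau -> C22 tau -> x \in X -> x \in tau (X :\ x) ->
  tau X = tau (X :\ x).
Proof.
move=> ext c22 xX x_tau; apply: c22; first exact: subsetDl.
apply/subsetP => y yX; have [-> // | yNx] := eqVneq y x.
by apply: (subsetP (ext _)); rewrite in_setD1 yNx.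
Qed.

Lemma bases_cap_sub_ex (X : {set E}) :
  extensive tau -> C22 tau -> bases_cap tau X \subset ex tau X.
Proof.
move=> ext c22; apply/subsetP => x x_cap.
have xX := subsetP (bases_cap_subset X) x x_cap.
rewrite inE xX /=; apply/negP => x_tau.
have tauXx := tau_setD1_mem ext c22 xX x_tau.
have := subsetP (bases_cap_sub (subsetDl X [set x]) (esym tauXx)) x x_cap.
by rewrite setD11.
Qed.

End ExtremePoints.

Theorem mainTheorem13 (E : finType) (tau : {set E} -> {set E}) :
  (violator_space tau -> forall X : {set E}, ex tau X = bases_cap tau X) /\
  (convex_space tau -> forall X : {set E}, ex tau X \subset bases_cap tau X).
Proof.
split.
- move=> [ext c22] X; apply/eqP; rewrite eqEsubset bases_cap_sub_ex // andbT.
  by apply: ex_sub_bases_cap => // B x; apply: C22_tau_setD1.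
- move=> [ext cvx] X; apply: ex_sub_bases_cap => // B x.
  exact: convexity_tau_setD1.
Qed.
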